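(* Let $K\subset\mathbb{R}^d$ be compact, let $f:K\to\mathbb{R}$ be continuous and let $\varepsilon>0$. Then there exists a two-layer Morph-Net $N:\mathbb{R}^d\to\mathbb{R}$ (which may be taken to use dilation neurons only) such that $\sup_{{\bm{x}}\in K}|f({\bm{x}})-N({\bm{x}})|<\varepsilon$.
   Context: For ${\bm{x}}\in\mathbb{R}^p$ write ${\bm{x}}'=(x_1,\dots,x_p,0)\in\mathbb{R}^{p+1}$ (augmented input). For a structuring element ${\bm{s}}\in\mathbb{R}^{p+1}$, the dilation neuron computes ${\bm{x}}\oplus{\bm{s}}=\max_{1\le k\le p+1}(x'_k+s_k)$ and the erosion neuron computes ${\bm{x}}\ominus{\bm{s}}=\min_{1\le k\le p+1}(x'_k-s_k)$. A dilation-erosion layer applied to ${\bm{y}}\in\mathbb{R}^p$ consists of finitely many dilation and erosion neurons (each with its own structuring element in $\mathbb{R}^{p+1}$) all applied to ${\bm{y}}$, and outputs the vector of their values. A linear combination layer is an affine map ${\bm{z}}\mapsto A{\bm{z}}+{\bm{c}}$. A two-layer Morph-Net $N:\mathbb{R}^d\to\mathbb{R}$ is the composition: dilation-erosion layer on ${\bm{x}}\in\mathbb{R}^d$, then a linear combination layer, then a second dilation-erosion layer applied to the resulting vector, then a linear combination layer with a single real output. *)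

From Stdlib Require Import Reals Lra Lia List.
Open Scope R_scope.

(* A vector of R^p is represented by a function nat -> R whose meaningful
   coordinates are 0, ..., p-1 (coordinate k+1 of the paper = index k). *)
Definition vec := nat -> R.

Fixpoint fsum (n : nat) (g : nat -> R) : R :=
  match n with
  | O => 0
  | S n' => fsum n' g + g n'
  end.

(* max / min over k = 0 .. n (n+1 entries) *)
Fixpoint maxk (g : nat -> R) (n : nat) : R :=
  match n with
  | O => g O
  | S n' => Rmax (maxk g n') (g (S n'))
  end.
Fixpoint mink (g : nat -> R) (n : nat) : R :=
  match n with
  | O => g O
  | S n' => Rmin (mink g n') (g (S n'))
  end.

(* augmented input x' = (x_1, ..., x_p, 0) in R^{p+1} *)
Definition aug (p : nat) (x : vec) : vec :=
  fun k => if Nat.ltb k p then x k else 0.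

Definition dilation (p : nat) (x s : vec) : R :=
  maxk (fun k => aug p x k + s k) p.
Definition erosion (p : nat) (x s : vec) : R :=
  mink (fun k => aug p x k - s k) p.

Record neuron := mkNeuron { is_dilation : bool ; selem : vec }.

Definition neuron_eval (p : nat) (nu : neuron) (x : vec) : R :=
  if is_dilation nu then dilation p x (selem nu) else erosion p x (selem nu).

Definition de_layer (p : nat) (ns : nat -> neuron) (x : vec) : vec :=
  fun j => neuron_eval p (ns j) x.

Definition lin_layer (n : nat) (A : nat -> nat -> R) (c : vec) (z : vec) : vec :=
  fun i => fsum n (fun j => A i j * z j) + c i.

(* two-layer Morph-Net R^d -> R:
   DE layer (n1 neurons on R^d), affine R^n1 -> R^m, DE layer (n2 neurons on R^m),
   affine R^n2 -> R. *)
Record MorphNet2 := mkMorphNet2 {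
  mn_n1 : nat ; mn_L1 : nat -> neuron ;
  mn_m : nat ; mn_A : nat -> nat -> R ; mn_c : vec ;
  mn_n2 : nat ; mn_L2 : nat -> neuron ;
  mn_w : vec ; mn_b : R }.

Definition morphnet_eval (d : nat) (N : MorphNet2) (x : vec) : R :=
  let z := de_layer d (mn_L1 N) x in
  let y := lin_layer (mn_n1 N) (mn_A N) (mn_c N) z in
  let u := de_layer (mn_m N) (mn_L2 N) y in
  fsum (mn_n2 N) (fun j => mn_w N j * u j) + mn_b N.

Definition dilation_only (N : MorphNet2) : Prop :=
  (forall j, (j < mn_n1 N)%nat -> is_dilation (mn_L1 N j) = true) /\
  (forall j, (j < mn_n2 N)%nat -> is_dilation (mn_L2 N j) = true).

Definition dist (d : nat) (x y : vec) : R :=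
  sqrt (fsum d (fun k => (x k - y k) ^ 2)).

Definition open_set (d : nat) (U : vec -> Prop) : Prop :=
  forall x, U x -> exists r, r > 0 /\ forall y, dist d x y < r -> U y.

(* R^d embedded: coordinates >= d vanish *)
Definition in_Rd (d : nat) (x : vec) : Prop := forall k, (d <= k)%nat -> x k = 0.

Definition compact_set (d : nat) (K : vec -> Prop) : Prop :=
  forall (I : Type) (U : I -> vec -> Prop),
    (forall i, open_set d (U i)) ->
    (forall x, K x -> exists i, U i x) ->
    exists l : list I, forall x, K x -> exists i, In i l /\ U i x.

(* continuity of f on K (i.e. of the restriction f : K -> R) *)
Definition continuous_on (d : nat) (K : vec -> Prop) (f : vec -> R) : Prop :=
  forall x, K x -> forall e, e > 0 -> exists delta, delta > 0 /\
    forall y, K y -> dist d x y < delta -> Rabs (f x - f y) < e.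

From Pilot Require Import Defs.
From Stdlib Require Import Reals Lra Lia List.
Open Scope R_scope.

(* A dilation neuron whose structuring element is 0 on a block of coordinates
   and very negative elsewhere computes, on bounded inputs, the maximum of that
   block.  Hence a two-layer dilation-only net realizes, on a bounded set, any
   difference G - H of maxima of affine functions: the first layer copies the
   input, the affine layer lists the pieces of G and H, the second layer takes
   the two block maxima.  Such differences are closed under max, and f is
   approximated by a maximum of finitely many sup-norm ramps built from a
   finite cover of K on which f oscillates little. *)

Lemma Rabs_le_inv a b : Rabs a <= b -> - b <= a <= b.
Proof. unfold Rabs; destruct Rcase_abs; intros; lra. Qed.

Lemma fsum_ext n g h : (forall k, (k < n)%nat -> g k = h k) -> fsum n g = fsum n h.
Proof.
  induction n as [|n IH]; simpl; intros H; [reflexivity|].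
  rewrite IH, H; [reflexivity|lia|intros; apply H; lia].
Qed.

Lemma fsum_plus n g h : fsum n (fun k => g k + h k) = fsum n g + fsum n h.
Proof. induction n as [|n IH]; simpl; [lra|rewrite IH; lra]. Qed.

Lemma fsum_scale n c g : fsum n (fun k => c * g k) = c * fsum n g.
Proof. induction n as [|n IH]; simpl; [lra|rewrite IH; lra]. Qed.

Lemma fsum_zero n : fsum n (fun _ => 0) = 0.
Proof. induction n as [|n IH]; simpl; [lra|rewrite IH; lra]. Qed.

Lemma fsum_nonneg n g : (forall k, 0 <= g k) -> 0 <= fsum n g.
Proof. intros H; induction n as [|n IH]; simpl; [lra|specialize (H n); lra]. Qed.

Lemma fsum_indicator n k x : (k < n)%nat ->
  fsum n (fun j => (if Nat.eqb j k then 1 else 0) * x j) = x k.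
Proof.
  induction n as [|n IH]; intros Hk; [lia|]. simpl.
  destruct (Nat.eqb_spec n k) as [->|Hnk].
  - rewrite (fsum_ext _ _ (fun _ => 0)), fsum_zero; [lra|].
    intros j Hj. destruct (Nat.eqb_spec j k); [lia|lra].
  - rewrite IH by lia. lra.
Qed.

Lemma fsum_le_const n g c : (forall k, (k < n)%nat -> g k <= c) -> fsum n g <= INR n * c.
Proof.
  induction n as [|n IH]; intros H; simpl fsum; [simpl; lra|]. rewrite S_INR.
  assert (fsum n g <= INR n * c) by (apply IH; intros; apply H; lia).
  assert (g n <= c) by (apply H; lia). lra.
Qed.

Lemma fsum_ge_term n g k : (forall j, 0 <= g j) -> (k < n)%nat -> g k <= fsum n g.
Proof.
  induction n as [|n IH]; simpl; intros H Hk; [lia|].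
  pose proof (fsum_nonneg n g H). pose proof (H n).
  destruct (Nat.eq_dec k n) as [->|Hkn]; [lra|].
  assert (g k <= fsum n g) by (apply IH; auto; lia). lra.
Qed.

Lemma fsum_abs_le n a x B : (forall j, (j < n)%nat -> Rabs (x j) <= B) ->
  Rabs (fsum n (fun j => a j * x j)) <= fsum n (fun j => Rabs (a j)) * B.
Proof.
  induction n as [|n IH]; simpl; intros H; [rewrite Rabs_R0; lra|].
  eapply Rle_trans; [apply Rabs_triang|]. rewrite Rabs_mult.
  assert (Rabs (a n) * Rabs (x n) <= Rabs (a n) * B)
    by (apply Rmult_le_compat_l; [apply Rabs_pos|apply H; lia]).
  assert (Rabs (fsum n (fun j => a j * x j)) <= fsum n (fun j => Rabs (a j)) * B)
    by (apply IH; intros; apply H; lia).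
  lra.
Qed.

Lemma maxk_ge g n k : (k <= n)%nat -> g k <= maxk g n.
Proof.
  induction n as [|n IH]; simpl; intros H; [replace k with O by lia; lra|].
  destruct (Nat.eq_dec k (S n)) as [->|Hk]; [apply Rmax_r|].
  eapply Rle_trans; [apply IH; lia|apply Rmax_l].
Qed.

Lemma maxk_le g n v : (forall k, (k <= n)%nat -> g k <= v) -> maxk g n <= v.
Proof.
  induction n as [|n IH]; simpl; intros H; [apply H; lia|].
  apply Rmax_lub; [apply IH; intros; apply H|apply H]; lia.
Qed.

Lemma maxk_eq g n v : (forall k, (k <= n)%nat -> g k <= v) ->
  (exists k, (k <= n)%nat /\ g k = v) -> maxk g n = v.
Proof.
  intros H [k [Hk <-]]. apply Rle_antisym; [apply maxk_le; auto|apply maxk_ge; auto].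
Qed.

Lemma fold_Rmax_ge a B0 l : In a l -> a <= fold_right Rmax B0 l.
Proof.
  induction l as [|b l IH]; simpl; [tauto|]. intros [->|Ha]; [apply Rmax_l|].
  eapply Rle_trans; [apply IH; auto|apply Rmax_r].
Qed.

Lemma fold_Rmax_le B0 l v : (forall a, In a l -> a <= v) -> B0 <= v ->
  fold_right Rmax B0 l <= v.
Proof.
  induction l as [|b l IH]; simpl; intros H H0; auto.
  apply Rmax_lub; [apply H|apply IH]; auto.
Qed.

Lemma list_uniform_bound {A : Type} (P : A -> R -> Prop) l :
  (forall a B B', B <= B' -> P a B -> P a B') ->
  (forall a, In a l -> exists B, P a B) -> exists B, forall a, In a l -> P a B.
Proof.
  intros Hmono. induction l as [|a l IH]; intros H; [exists 0; intros _ []|].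
  destruct IH as [B1 H1]; [intros; apply H; right; auto|].
  destruct (H a) as [B2 H2]; [left; auto|].
  exists (Rmax B1 B2). intros a' [<-|Ha'].
  - eapply Hmono; [apply Rmax_r|auto].
  - eapply Hmono; [apply Rmax_l|apply H1; auto].
Qed.

Lemma list_pos_lower_bound {A : Type} (g : A -> R) l : (forall a, In a l -> g a > 0) ->
  exists r, r > 0 /\ forall a, In a l -> r <= g a.
Proof.
  induction l as [|a l IH]; intros H; [exists 1; split; [lra|intros _ []]|].
  destruct IH as [r [Hr H1]]; [intros; apply H; right; auto|].
  pose proof (H a (or_introl eq_refl)).
  exists (Rmin r (g a)). split; [apply Rmin_glb_lt; lra|].
  intros a' [<-|Ha']; [apply Rmin_r|].
  eapply Rle_trans; [apply Rmin_l|apply H1; auto].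
Qed.

Fixpoint dist_inf (n : nat) (x y : vec) : R :=
  match n with O => 0 | S n' => Rmax (dist_inf n' x y) (Rabs (x n' - y n')) end.

Lemma dist_inf_nonneg n x y : 0 <= dist_inf n x y.
Proof. induction n; simpl; [lra|]. eapply Rle_trans; [eassumption|apply Rmax_l]. Qed.

Lemma coord_le_dist_inf n x y k : (k < n)%nat -> Rabs (x k - y k) <= dist_inf n x y.
Proof.
  induction n as [|n IH]; simpl; intros Hk; [lia|].
  destruct (Nat.eq_dec k n) as [->|Hkn]; [apply Rmax_r|].
  eapply Rle_trans; [apply IH; lia|apply Rmax_l].
Qed.

Lemma dist_inf_le n x y B : 0 <= B ->
  (forall k, (k < n)%nat -> Rabs (x k - y k) <= B) -> dist_inf n x y <= B.
Proof.
  induction n as [|n IH]; simpl; intros HB H; [lra|].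
  apply Rmax_lub; [apply IH; auto; intros; apply H; lia|apply H; lia].
Qed.

Lemma dist_inf_refl n x : dist_inf n x x = 0.
Proof.
  apply Rle_antisym; [|apply dist_inf_nonneg].
  apply dist_inf_le; [lra|]. intros. unfold Rminus. rewrite Rplus_opp_r, Rabs_R0. lra.
Qed.

Lemma dist_inf_sym n x y : dist_inf n x y = dist_inf n y x.
Proof. induction n as [|n IH]; simpl; [|rewrite IH, Rabs_minus_sym]; reflexivity. Qed.

Lemma dist_inf_triangle n x y z : dist_inf n x z <= dist_inf n x y + dist_inf n y z.
Proof.
  pose proof (dist_inf_nonneg n x y); pose proof (dist_inf_nonneg n y z).
  apply dist_inf_le; [lra|]. intros k Hk.
  pose proof (coord_le_dist_inf n x y k Hk); pose proof (coord_le_dist_inf n y z k Hk).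
  replace (x k - z k) with ((x k - y k) + (y k - z k)) by ring.
  eapply Rle_trans; [apply Rabs_triang|lra].
Qed.

Lemma dist_inf_le_dist n x y : dist_inf n x y <= Defs.dist n x y.
Proof.
  apply dist_inf_le; [apply sqrt_pos|]. intros k Hk.
  unfold Defs.dist. rewrite <- (sqrt_pow2 (Rabs (x k - y k))) by apply Rabs_pos.
  apply sqrt_le_1_alt. rewrite pow2_abs.
  apply (fsum_ge_term n (fun k => (x k - y k) ^ 2)); auto. intros; apply pow2_ge_0.
Qed.

(* Each of the n squares is at most dist_inf^2, and n <= (n + 1)^2. *)
Lemma dist_le_dist_inf n x y : Defs.dist n x y <= (INR n + 1) * dist_inf n x y.
Proof.
  set (t := dist_inf n x y). pose proof (dist_inf_nonneg n x y) as Ht. fold t in Ht.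
  pose proof (pos_INR n).
  unfold Defs.dist. rewrite <- (sqrt_pow2 ((INR n + 1) * t)) by nra.
  apply sqrt_le_1_alt. eapply Rle_trans.
  - apply (fsum_le_const n _ (t ^ 2)). intros k Hk.
    rewrite <- pow2_abs. apply pow_incr. split; [apply Rabs_pos|apply coord_le_dist_inf; auto].
  - simpl. nra.
Qed.

Lemma open_dist_inf_ball d c r : Defs.open_set d (fun y => dist_inf d y c < r).
Proof.
  intros y Hy. exists (r - dist_inf d y c). split; [lra|]. intros z Hz.
  pose proof (dist_inf_triangle d z y c). rewrite (dist_inf_sym d z y) in H.
  pose proof (dist_inf_le_dist d y z). lra.
Qed.

Lemma compact_ball_cover d K (P : vec -> R -> Prop) : compact_set d K ->
  (forall x, K x -> exists r, r > 0 /\ P x r) ->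
  exists l : list (vec * R),
    (forall q, In q l -> K (fst q) /\ snd q > 0 /\ P (fst q) (snd q)) /\
    (forall x, K x -> exists q, In q l /\ dist_inf d x (fst q) < snd q).
Proof.
  intros HK HP.
  set (Good := fun q : vec * R => K (fst q) /\ snd q > 0 /\ P (fst q) (snd q)).
  destruct (HK {q | Good q} (fun i y => dist_inf d y (fst (proj1_sig i)) < snd (proj1_sig i)))
    as [li Hli].
  - intros i. apply open_dist_inf_ball.
  - intros x Kx. destruct (HP x Kx) as [r [Hr Pr]].
    exists (exist Good (x, r) (conj Kx (conj Hr Pr))). simpl. rewrite dist_inf_refl. lra.
  - exists (map (@proj1_sig _ Good) li). split.
    + intros q Hq. apply in_map_iff in Hq. destruct Hq as [i [<- _]]. apply proj2_sig.
    + intros x Kx. destruct (Hli x Kx) as [i [Hi Hx]].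
      exists (proj1_sig i). split; [apply in_map|]; auto.
Qed.

Lemma compact_bounded d K g : compact_set d K ->
  (forall x, K x -> exists r B, r > 0 /\ forall y, K y -> dist_inf d y x < r -> g y <= B) ->
  exists B, 0 <= B /\ forall x, K x -> g x <= B.
Proof.
  intros HK Hloc.
  destruct (compact_ball_cover d K
              (fun x r => exists B, forall y, K y -> dist_inf d y x < r -> g y <= B) HK)
    as [l [Hl Hcov]].
  { intros x Kx. destruct (Hloc x Kx) as [r [B [Hr HB]]]. exists r. eauto. }
  destruct (list_uniform_bound
              (fun q B => forall y, K y -> dist_inf d y (fst q) < snd q -> g y <= B) l)
    as [B HB].
  - intros q B B' HBB' H y Ky Hy. specialize (H y Ky Hy). lra.
  - intros q Hq. apply (Hl q Hq).
  - exists (Rmax 0 B). split; [apply Rmax_l|]. intros x Kx.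
    destruct (Hcov x Kx) as [q [Hq Hx]].
    eapply Rle_trans; [apply (HB q Hq x Kx Hx)|apply Rmax_r].
Qed.

Lemma continuous_on_dist_inf d K f x e : continuous_on d K f -> K x -> e > 0 ->
  exists r, r > 0 /\ forall y, K y -> dist_inf d y x < r -> Rabs (f x - f y) < e.
Proof.
  intros Hf Kx He. destruct (Hf x Kx e He) as [delta [Hdelta Hc]].
  pose proof (pos_INR d).
  exists (delta / (INR d + 1)). split; [apply Rdiv_lt_0_compat; lra|].
  intros y Ky Hy. apply Hc; auto. rewrite dist_inf_sym in Hy.
  pose proof (dist_le_dist_inf d x y).
  apply (Rmult_lt_compat_l (INR d + 1)) in Hy; [|lra].
  replace ((INR d + 1) * (delta / (INR d + 1))) with delta in Hy by (field; lra). lra.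
Qed.

Lemma compact_continuous_bounded d K f : compact_set d K -> continuous_on d K f ->
  exists B, 0 <= B /\ forall x, K x -> Rabs (f x) <= B.
Proof.
  intros HK Hf. apply (compact_bounded d K (fun x => Rabs (f x)) HK).
  intros x Kx. destruct (continuous_on_dist_inf d K f x 1 Hf Kx ltac:(lra)) as [r [Hr Hc]].
  exists r, (Rabs (f x) + 1). split; auto. intros y Ky Hy.
  specialize (Hc y Ky Hy). pose proof (Rabs_triang_inv (f x) (f y)).
  rewrite Rabs_minus_sym in Hc. pose proof (Rabs_triang (f y - f x) (f x)).
  replace (f y - f x + f x) with (f y) in H0 by ring. lra.
Qed.

Lemma compact_coord_bounded d K : compact_set d K ->
  exists B, forall x, K x -> forall k, (k < d)%nat -> Rabs (x k) <= B.
Proof.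
  intros HK. destruct (compact_bounded d K (fun x => dist_inf d x (fun _ => 0)) HK)
    as [B [_ HB]].
  - intros x Kx. exists 1, (dist_inf d x (fun _ => 0) + 1). split; [lra|].
    intros y Ky Hy. pose proof (dist_inf_triangle d y x (fun _ => 0)). lra.
  - exists B. intros x Kx k Hk. rewrite <- (Rminus_0_r (x k)).
    eapply Rle_trans; [apply (coord_le_dist_inf d x (fun _ => 0) k Hk)|auto].
Qed.

Section PiecewiseAffine.
Variable d : nat.

Definition is_affine (g : vec -> R) : Prop :=
  exists a b, forall x, g x = fsum d (fun k => a k * x k) + b.

Lemma affine_const c : is_affine (fun _ => c).
Proof.
  exists (fun _ => 0), c. intros x.
  rewrite (fsum_ext _ _ (fun _ => 0)), fsum_zero; [lra|intros; lra].
Qed.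

Lemma affine_coord k : (k < d)%nat -> is_affine (fun x => x k).
Proof.
  intros Hk. exists (fun j => if Nat.eqb j k then 1 else 0), 0. intros x.
  rewrite fsum_indicator; auto; lra.
Qed.

Lemma affine_plus g h : is_affine g -> is_affine h -> is_affine (fun x => g x + h x).
Proof.
  intros [a [b Hg]] [a' [b' Hh]]. exists (fun k => a k + a' k), (b + b'). intros x.
  rewrite Hg, Hh, (fsum_ext _ (fun k => (a k + a' k) * x k) (fun k => a k * x k + a' k * x k))
    by (intros; ring).
  rewrite fsum_plus. ring.
Qed.

Lemma affine_scale c g : is_affine g -> is_affine (fun x => c * g x).
Proof.
  intros [a [b Hg]]. exists (fun k => c * a k), (c * b). intros x.
  rewrite Hg, (fsum_ext _ (fun k => c * a k * x k) (fun k => c * (a k * x k)))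
    by (intros; ring).
  rewrite fsum_scale. ring.
Qed.

Lemma affine_bounded g Rc : is_affine g ->
  exists B, forall x, (forall k, (k < d)%nat -> Rabs (x k) <= Rc) -> Rabs (g x) <= B.
Proof.
  intros [a [b Hg]]. exists (fsum d (fun k => Rabs (a k)) * Rc + Rabs b). intros x Hx.
  rewrite Hg. eapply Rle_trans; [apply Rabs_triang|].
  pose proof (fsum_abs_le d a x Rc Hx). lra.
Qed.

Definition max_affine (g : vec -> R) : Prop :=
  exists hs : list (vec -> R), (forall h, In h hs -> is_affine h) /\
    forall x, (forall h, In h hs -> h x <= g x) /\ exists h, In h hs /\ h x = g x.

Lemma max_affine_ext g g' : max_affine g -> (forall x, g x = g' x) -> max_affine g'.
Proof.
  intros [hs [Ha H]] E. exists hs. split; auto. intros x. rewrite <- E. apply H.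
Qed.

Lemma max_affine_of_affine g : is_affine g -> max_affine g.
Proof.
  intros Ha. exists (g :: nil). split; [intros h [<-|[]]; auto|].
  intros x. split; [intros h [<-|[]]; lra|exists g; split; [left|]; auto].
Qed.

Lemma max_affine_const c : max_affine (fun _ => c).
Proof. apply max_affine_of_affine, affine_const. Qed.

Lemma max_affine_max g1 g2 : max_affine g1 -> max_affine g2 ->
  max_affine (fun x => Rmax (g1 x) (g2 x)).
Proof.
  intros [hs1 [Ha1 H1]] [hs2 [Ha2 H2]]. exists (hs1 ++ hs2). split.
  - intros h Hh. apply in_app_or in Hh. destruct Hh; auto.
  - intros x. destruct (H1 x) as [U1 [h1 [I1 E1]]], (H2 x) as [U2 [h2 [I2 E2]]]. split.
    + intros h Hh. apply in_app_or in Hh. destruct Hh as [Hh|Hh].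
      * eapply Rle_trans; [apply U1; auto|apply Rmax_l].
      * eapply Rle_trans; [apply U2; auto|apply Rmax_r].
    + unfold Rmax. destruct Rle_dec.
      * exists h2. split; auto. apply in_or_app; auto.
      * exists h1. split; auto. apply in_or_app; auto.
Qed.

Lemma max_affine_plus g1 g2 : max_affine g1 -> max_affine g2 ->
  max_affine (fun x => g1 x + g2 x).
Proof.
  intros [hs1 [Ha1 H1]] [hs2 [Ha2 H2]].
  exists (flat_map (fun h1 => map (fun h2 x => h1 x + h2 x) hs2) hs1). split.
  - intros h Hh. apply in_flat_map in Hh. destruct Hh as [h1 [I1 Hh]].
    apply in_map_iff in Hh. destruct Hh as [h2 [<- I2]]. apply affine_plus; auto.
  - intros x. destruct (H1 x) as [U1 [h1 [I1 E1]]], (H2 x) as [U2 [h2 [I2 E2]]]. split.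
    + intros h Hh. apply in_flat_map in Hh. destruct Hh as [k1 [J1 Hh]].
      apply in_map_iff in Hh. destruct Hh as [k2 [<- J2]].
      specialize (U1 k1 J1); specialize (U2 k2 J2); lra.
    + exists (fun x => h1 x + h2 x). split; [|lra].
      apply in_flat_map. exists h1. split; auto. apply in_map_iff. exists h2; auto.
Qed.

Lemma max_affine_scale c g : 0 <= c -> max_affine g -> max_affine (fun x => c * g x).
Proof.
  intros Hc [hs [Ha H]]. exists (map (fun h x => c * h x) hs). split.
  - intros h Hh. apply in_map_iff in Hh. destruct Hh as [h' [<- I]]. apply affine_scale; auto.
  - intros x. destruct (H x) as [U [h [I E]]]. split.
    + intros h' Hh. apply in_map_iff in Hh. destruct Hh as [h'' [<- I']].
      apply Rmult_le_compat_l; auto.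
    + exists (fun x => c * h x). split; [apply in_map_iff; exists h; auto|rewrite E; auto].
Qed.

Lemma max_affine_dist_inf n c : (n <= d)%nat -> max_affine (fun x => dist_inf n x c).
Proof.
  induction n as [|n IH]; intros Hn; [apply (max_affine_const 0)|].
  simpl. apply max_affine_max; [apply IH; lia|].
  apply (max_affine_ext (fun x => Rmax (x n + - c n) (-1 * x n + c n))).
  - apply max_affine_max; apply max_affine_of_affine, affine_plus;
      auto using affine_const, affine_scale, affine_coord with arith.
  - intros x. unfold Rabs, Rmax. repeat destruct Rle_dec; destruct Rcase_abs; lra.
Qed.

Definition dc (g : vec -> R) : Prop :=
  exists G H, max_affine G /\ max_affine H /\ forall x, g x = G x - H x.

Lemma dc_max g1 g2 : dc g1 -> dc g2 -> dc (fun x => Rmax (g1 x) (g2 x)).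
Proof.
  intros [G1 [H1 [A1 [B1 E1]]]] [G2 [H2 [A2 [B2 E2]]]].
  exists (fun x => Rmax (G1 x + H2 x) (G2 x + H1 x)), (fun x => H1 x + H2 x).
  split; [apply max_affine_max; apply max_affine_plus; auto|].
  split; [apply max_affine_plus; auto|].
  intros x. rewrite E1, E2. unfold Rmax. repeat destruct Rle_dec; lra.
Qed.

Lemma dc_const c : dc (fun _ => c).
Proof.
  exists (fun _ => c), (fun _ => 0).
  split; [|split]; [apply max_affine_const|apply max_affine_const|intros; lra].
Qed.

Lemma dc_fold_max {A : Type} (h : A -> vec -> R) B0 l : (forall a, In a l -> dc (h a)) ->
  dc (fun x => fold_right Rmax B0 (map (fun a => h a x) l)).
Proof.
  induction l as [|a l IH]; intros Hl; [apply (dc_const B0)|].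
  apply (dc_max (h a)); [apply Hl; left|apply IH; intros; apply Hl; right]; auto.
Qed.

End PiecewiseAffine.

(* For b <= p the augmented coordinate k = p lies outside the window too. *)
Definition window (a b : nat) (M : R) : vec :=
  fun k => if (Nat.leb a k && Nat.ltb k b)%bool then 0 else - M.

Lemma dilation_window p y B a b v :
  (forall k, (k < p)%nat -> Rabs (y k) <= B) -> (b <= p)%nat ->
  (forall k, (a <= k < b)%nat -> y k <= v) ->
  (exists k, (a <= k < b)%nat /\ y k = v) ->
  dilation p y (window a b (2 * B + 1)) = v.
Proof.
  intros Hy Hbp Hup [k0 [Hk0 Hv]].
  assert (Hyk0 : Rabs (y k0) <= B) by (apply Hy; lia).
  pose proof (Rabs_pos (y k0)). pose proof (Rabs_le_inv _ _ Hyk0).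
  unfold dilation, aug, window. apply maxk_eq.
  - intros k Hk.
    destruct (Nat.ltb_spec k p), (Nat.leb_spec a k), (Nat.ltb_spec k b); simpl;
      try (rewrite Rplus_0_r; apply Hup; lia); try lia;
      try (pose proof (Rabs_le_inv _ _ (Hy k ltac:(lia)))); lra.
  - exists k0. split; [lia|].
    destruct (Nat.ltb_spec k0 p), (Nat.leb_spec a k0), (Nat.ltb_spec k0 b); try lia.
    simpl. lra.
Qed.

Lemma dilation_window_max p y B a (hs : list (vec -> R)) g x :
  (forall k, (k < p)%nat -> Rabs (y k) <= B) -> (a + length hs <= p)%nat ->
  (forall i, (i < length hs)%nat -> y (a + i)%nat = nth i hs (fun _ => 0) x) ->
  (forall h, In h hs -> h x <= g x) -> (exists h, In h hs /\ h x = g x) ->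
  dilation p y (window a (a + length hs) (2 * B + 1)) = g x.
Proof.
  intros Hy Hp Hyhs Hup [h [Hh Hhx]]. apply (dilation_window p y B); auto.
  - intros k Hk. replace k with (a + (k - a))%nat by lia.
    rewrite Hyhs by lia. apply Hup, nth_In. lia.
  - destruct (In_nth _ _ (fun _ => 0) Hh) as [i [Hi Hith]].
    exists (a + i)%nat. split; [lia|]. rewrite Hyhs, Hith; auto.
Qed.

Lemma affine_list_matrix d (hs : list (vec -> R)) : (forall h, In h hs -> is_affine d h) ->
  exists (A : nat -> nat -> R) (c : vec), forall i x, (i < length hs)%nat ->
    nth i hs (fun _ => 0) x = fsum d (fun j => A i j * x j) + c i.
Proof.
  induction hs as [|h hs IH]; intros Ha.
  - exists (fun _ _ => 0), (fun _ => 0). simpl; intros; lia.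
  - destruct (Ha h (or_introl eq_refl)) as [a [b Hh]].
    destruct IH as [A [c HA]]; [intros; apply Ha; right; auto|].
    exists (fun i => match i with O => a | S i' => A i' end),
           (fun i => match i with O => b | S i' => c i' end).
    intros [|i] x Hi; simpl; [apply Hh|apply HA; simpl in Hi; lia].
Qed.

Lemma affine_list_bounded d Rc (hs : list (vec -> R)) : (forall h, In h hs -> is_affine d h) ->
  exists B, forall h, In h hs ->
    forall x, (forall k, (k < d)%nat -> Rabs (x k) <= Rc) -> Rabs (h x) <= B.
Proof.
  intros Ha. apply list_uniform_bound.
  - intros h B B' HBB' H x Hx. specialize (H x Hx). lra.
  - intros h Hh. apply affine_bounded, Ha, Hh.
Qed.

Lemma dc_realizable d (K : vec -> Prop) Rc F :
  (forall x, K x -> forall k, (k < d)%nat -> Rabs (x k) <= Rc) -> dc d F ->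
  exists N, dilation_only N /\ forall x, K x -> morphnet_eval d N x = F x.
Proof.
  intros HRc [G [H [[hsG [affG maxG]] [[hsH [affH maxH]] EF]]]].
  set (hs := hsG ++ hsH).
  assert (aff : forall h, In h hs -> is_affine d h)
    by (intros h Hh; apply in_app_or in Hh; destruct Hh; auto).
  destruct (affine_list_matrix d hs aff) as [A [c HA]].
  destruct (affine_list_bounded d Rc hs aff) as [B HB].
  set (g := length hsG). set (m := length hs).
  assert (Hm : m = (g + length hsH)%nat) by apply length_app.
  set (L1 := fun j => mkNeuron true (window j (S j) (2 * Rc + 1))).
  set (L2 := fun j => mkNeuron true
               (if Nat.eqb j 0 then window 0 g (2 * B + 1)
                else window g (g + length hsH) (2 * B + 1))).
  exists (mkMorphNet2 d L1 m A c 2 L2 (fun j => if Nat.eqb j 0 then 1 else -1) 0).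
  split; [split; intros [|j] _; reflexivity|].
  intros x Kx.
  assert (Hz : forall j, (j < d)%nat -> de_layer d L1 x j = x j).
  { intros j Hj. apply (dilation_window d x Rc); [apply HRc; auto|lia| |].
    - intros k Hk. replace k with j by lia. lra.
    - exists j. split; [lia|reflexivity]. }
  set (y := lin_layer d A c (de_layer d L1 x)).
  assert (Hy : forall i, (i < m)%nat -> y i = nth i hs (fun _ => 0) x).
  { intros i Hi. rewrite HA by auto. unfold y, lin_layer. f_equal.
    apply fsum_ext. intros j Hj. rewrite Hz; auto. }
  assert (HyB : forall i, (i < m)%nat -> Rabs (y i) <= B).
  { intros i Hi. rewrite Hy by auto. apply HB; [apply nth_In; auto|apply HRc; auto]. }
  assert (HGx : dilation m y (window 0 g (2 * B + 1)) = G x).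
  { apply (dilation_window_max m y B 0 hsG G x HyB); [lia| |apply maxG|apply maxG].
    intros i Hi. rewrite Hy by lia. unfold hs. rewrite app_nth1; auto. }
  assert (HHx : dilation m y (window g (g + length hsH) (2 * B + 1)) = H x).
  { apply (dilation_window_max m y B g hsH H x HyB); [lia| |apply maxH|apply maxH].
    intros i Hi. rewrite Hy by lia. unfold hs. rewrite app_nth2 by lia.
    f_equal. lia. }
  unfold morphnet_eval. simpl. fold y.
  unfold de_layer, neuron_eval. simpl. rewrite HGx, HHx, EF. lra.
Qed.

Definition ramp d (c C : R) (q : vec) (r : R) (x : vec) : R :=
  c - C * Rmax 0 (dist_inf d x q - r).

Lemma dc_ramp d c C q r : 0 <= C -> dc d (ramp d c C q r).
Proof.
  intros HC. exists (fun _ => c), (fun x => C * Rmax 0 (dist_inf d x q + - r)).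
  split; [apply max_affine_const|split; [|reflexivity]].
  apply max_affine_scale; auto.
  apply (max_affine_max d (fun _ => 0)); [apply max_affine_const|].
  apply max_affine_plus; [apply max_affine_dist_inf; lia|apply max_affine_const].
Qed.

Lemma ramp_inside d c C q r x : dist_inf d x q < r -> ramp d c C q r x = c.
Proof. intros H. unfold ramp, Rmax. destruct Rle_dec; lra. Qed.

Lemma ramp_le d c C q r x : 0 <= C -> ramp d c C q r x <= c.
Proof.
  intros HC. unfold ramp.
  pose proof (Rmult_le_pos C _ HC (Rmax_l 0 (dist_inf d x q - r))). lra.
Qed.

Lemma ramp_le_far d c C q r x : 0 <= C -> 2 * r <= dist_inf d x q ->
  ramp d c C q r x <= c - C * r.
Proof.
  intros HC Hx. unfold ramp.
  assert (r <= Rmax 0 (dist_inf d x q - r)) by (eapply Rle_trans; [|apply Rmax_r]; lra).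
  pose proof (Rmult_le_compat_l C _ _ HC H). lra.
Qed.

(* Cover K by sup-norm balls B(q, r) on whose double f oscillates by less than e;
   the ramps of height f(q) - e are flat on B(q, r) and, outside B(q, 2r), fall
   below -Bf, so their maximum stays between f - 2e and f. *)
Section Approximation.
Variables (d : nat) (K : vec -> Prop) (f : vec -> R) (e Bf rmin : R) (l : list (vec * R)).
Hypothesis e_pos : 0 < e.
Hypothesis Bf_nonneg : 0 <= Bf.
Hypothesis f_bounded : forall x, K x -> Rabs (f x) <= Bf.
Hypothesis rmin_pos : 0 < rmin.
Hypothesis radius_ge : forall q, In q l -> rmin <= snd q.
Hypothesis center_in : forall q, In q l -> K (fst q).
Hypothesis oscillation : forall q, In q l ->
  forall y, K y -> dist_inf d y (fst q) < 2 * snd q -> Rabs (f (fst q) - f y) < e.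
Hypothesis cover : forall x, K x -> exists q, In q l /\ dist_inf d x (fst q) < snd q.

Definition slope : R := 2 * Bf / rmin.

Definition approximant (x : vec) : R :=
  fold_right Rmax (- Bf) (map (fun q => ramp d (f (fst q) - e) slope (fst q) (snd q) x) l).

Lemma slope_nonneg : 0 <= slope.
Proof. unfold slope. apply Rmult_le_pos; [lra|left; apply Rinv_0_lt_compat; lra]. Qed.

Lemma approximant_dc : dc d approximant.
Proof. apply dc_fold_max. intros q _. apply dc_ramp, slope_nonneg. Qed.

Lemma approximant_ge x : K x -> f x - 2 * e <= approximant x.
Proof.
  intros Kx. destruct (cover x Kx) as [q [Hq Hx]].
  eapply Rle_trans; [|apply fold_Rmax_ge, in_map, Hq]. rewrite ramp_inside by auto.
  assert (Hx2 : dist_inf d x (fst q) < 2 * snd q) by (pose proof (radius_ge q Hq); lra).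
  pose proof (Rabs_le_inv _ _ (Rlt_le _ _ (oscillation q Hq x Kx Hx2))). lra.
Qed.

Lemma approximant_le x : K x -> approximant x <= f x.
Proof.
  intros Kx. pose proof (Rabs_le_inv _ _ (f_bounded x Kx)).
  apply fold_Rmax_le; [|lra]. intros v Hv. apply in_map_iff in Hv. destruct Hv as [q [<- Hq]].
  pose proof slope_nonneg. pose proof (radius_ge q Hq).
  destruct (Rlt_or_le (dist_inf d x (fst q)) (2 * snd q)) as [Hnear|Hfar].
  - pose proof (Rabs_le_inv _ _ (Rlt_le _ _ (oscillation q Hq x Kx Hnear))).
    pose proof (ramp_le d (f (fst q) - e) slope (fst q) (snd q) x). lra.
  - pose proof (Rabs_le_inv _ _ (f_bounded _ (center_in q Hq))).
    pose proof (ramp_le_far d (f (fst q) - e) slope (fst q) (snd q) x ltac:(auto) Hfar).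
    assert (slope * rmin <= slope * snd q) by (apply Rmult_le_compat_l; auto).
    assert (slope * rmin = 2 * Bf) by (unfold slope; field; lra).
    lra.
Qed.

End Approximation.

Theorem mainTheorem4 (d : nat) (K : vec -> Prop) (f : vec -> R) (eps : R)
  (HKd : forall x, K x -> in_Rd d x)
  (HK : compact_set d K)
  (Hf : continuous_on d K f)
  (Heps : eps > 0) :
  exists N : MorphNet2, dilation_only N /\
    exists s, s < eps /\
      forall x, K x -> Rabs (f x - morphnet_eval d N x) <= s.
Proof.
  set (e := eps / 3).
  destruct (compact_ball_cover d K (fun x r => forall y, K y ->
              dist_inf d y x < 2 * r -> Rabs (f x - f y) < e) HK) as [l [Hl Hcover]].
  { intros x Kx. destruct (continuous_on_dist_inf d K f x e Hf Kx) as [r [Hr Hc]];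
      [unfold e; lra|].
    exists (r / 2). split; [lra|]. intros y Ky Hy. apply Hc; auto; lra. }
  destruct (compact_continuous_bounded d K f HK Hf) as [Bf [HBf0 HBf]].
  destruct (compact_coord_bounded d K HK) as [Rc HRc].
  destruct (list_pos_lower_bound snd l) as [rmin [Hrmin Hradius]];
    [intros q Hq; apply Hl, Hq|].
  assert (He : 0 < e) by (unfold e; lra).
  assert (Hcenter : forall q, In q l -> K (fst q)) by apply Hl.
  assert (Hosc : forall q, In q l -> forall y, K y ->
            dist_inf d y (fst q) < 2 * snd q -> Rabs (f (fst q) - f y) < e) by apply Hl.
  destruct (dc_realizable d K Rc (approximant d f e Bf rmin l) HRc
              (approximant_dc d f e Bf rmin l HBf0 Hrmin)) as [N [HN EN]].
  exists N. split; [exact HN|]. exists (2 * e). split; [unfold e; lra|].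
  intros x Kx. rewrite EN by exact Kx. apply Rabs_le.
  pose proof (approximant_ge d K f e Bf rmin l Hrmin Hradius Hosc Hcover x Kx).
  pose proof (approximant_le d K f e Bf rmin l He HBf0 HBf Hrmin Hradius Hcenter Hosc x Kx).
  lra.
Qed.
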